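(* For every positive integer $n$, the variety of complex $n$-dimensional nilpotent binary Leibniz algebras contains at least one rigid algebra.
   Context: An algebra is a Leibniz algebra if it satisfies $(xy)z=(xz)y+x(yz)$; it is a binary Leibniz algebra if every subalgebra generated by two elements is a Leibniz algebra; it is nilpotent if for some $m$ every product of $m$ elements (any bracketing) vanishes. The variety is the Zariski-closed set of bilinear products on a fixed $n$-dimensional complex vector space $V$ (identified with structure constants in $\mathbb{C}^{n^3}$) satisfying these conditions, with $GL(V)$ acting by $(g*\mu)(x,y)=g\mu(g^{-1}x,g^{-1}y)$. An algebra is rigid if its $GL(V)$-orbit is Zariski-open in the variety. *)

From mathcomp Require Import all_boot all_algebra.
From mathcomp Require Import complex.
From mathcomp Require Import Rstruct.
From mathcomp Require Import mpoly.

Set Implicit Arguments.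
Unset Strict Implicit.
Unset Printing Implicit Defensive.

Import GRing.Theory.
Local Open Scope ring_scope.

Definition CC := complex Rdefinitions.R.

(* A bilinear product on V = C^n, given by its structure constants:
   e_i e_j = \sum_k c i j k e_k.  Vectors of V are row vectors 'rV[CC]_n. *)
Definition sconst (n : nat) := 'I_n -> 'I_n -> 'I_n -> CC.

Definition vmul (n : nat) (c : sconst n) (x y : 'rV[CC]_n) : 'rV[CC]_n :=
  \row_k \sum_(i < n) \sum_(j < n) x 0 i * y 0 j * c i j k.

Definition leibniz_id (n : nat) (c : sconst n) (a b d : 'rV[CC]_n) : Prop :=
  vmul c (vmul c a b) d = vmul c (vmul c a d) b + vmul c a (vmul c b d).

Definition is_leibniz (n : nat) (c : sconst n) : Prop :=
  forall a b d, leibniz_id c a b d.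

Definition is_subalg (n : nat) (c : sconst n) (S : 'rV[CC]_n -> Prop) : Prop :=
  [/\ S 0,
      (forall u v, S u -> S v -> S (u + v)),
      (forall (a : CC) u, S u -> S (a *: u)) &
      (forall u v, S u -> S v -> S (vmul c u v))].

Definition in_gen (n : nat) (c : sconst n) (x y v : 'rV[CC]_n) : Prop :=
  forall S, is_subalg c S -> S x -> S y -> S v.

Definition binary_leibniz (n : nat) (c : sconst n) : Prop :=
  forall x y a b d, in_gen c x y a -> in_gen c x y b -> in_gen c x y d ->
    leibniz_id c a b d.

Inductive is_prod (n : nat) (c : sconst n) : nat -> 'rV[CC]_n -> Prop :=
| prod_leaf x : is_prod c 1 x
| prod_node i j x y : is_prod c i x -> is_prod c j y ->
    is_prod c (i + j) (vmul c x y).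

Definition nilpotent_alg (n : nat) (c : sconst n) : Prop :=
  exists m : nat, (0 < m)%N /\ forall v, is_prod c m v -> v = 0.

Definition nbl_variety (n : nat) (c : sconst n) : Prop :=
  binary_leibniz c /\ nilpotent_alg c.

(* GL(V)-orbit: c' = g * c, (g*mu)(x,y) = g mu(g^-1 x, g^-1 y); with row
   vectors, the linear map g acts as x |-> x *m g. *)
Definition in_orbit (n : nat) (c c' : sconst n) : Prop :=
  exists g : 'M[CC]_n, g \in unitmx /\
    forall x y, vmul c' x y = vmul c (x *m invmx g) (y *m invmx g) *m g.

Definition trip (n : nat) := ('I_n * 'I_n * 'I_n)%type.
Definition nvars (n : nat) := #|{: trip n}|.

Definition coords (n : nat) (c : sconst n) : 'I_(nvars n) -> CC :=
  fun t => let: (i, j, k) := enum_val t in c i j k.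

(* U is Zariski-open in P (subspace topology from C^{n^3}): U = P \ Z(F)
   for some family F of polynomials in the structure constants. *)
Definition rel_zariski_open (n : nat) (P U : sconst n -> Prop) : Prop :=
  exists F : {mpoly CC[nvars n]} -> Prop,
    forall c, U c <-> (P c /\ exists p, F p /\ p.@[coords c] != 0).

Definition rigid_in (n : nat) (P : sconst n -> Prop) (c : sconst n) : Prop :=
  rel_zariski_open P (in_orbit c).

(* The null-filiform algebra N, with e_i e_0 = e_(i+1), is rigid.  Write x^(m+1) = x^m x.
   If a nilpotent binary Leibniz algebra has an x with x^n <> 0, then x, x^2, ..., x^n is a basis:
   right multiplication R_x is nilpotent, so x^(n+1) = 0, and x is a cyclic vector of R_x.
   Binary Leibniz in the subalgebra generated by x makes every x^k, k >= 2, a right annihilator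
   of it, so in this basis the product is exactly that of N.  Conversely the image of e_0 under
   an isomorphism from N has nonzero n-th power.  So the orbit of N is the set of algebras of the
   variety where some coordinate of some x^n, a polynomial in the structure constants, is nonzero. *)

From Pilot Require Import Defs.
From mathcomp Require Import all_boot all_algebra.
From mathcomp Require Import complex.
From mathcomp Require Import Rstruct.
From mathcomp Require Import mpoly.
From mathcomp Require Import zify.

Set Implicit Arguments.
Unset Printing Implicit Defensive.

Import GRing.Theory.
Local Open Scope ring_scope.

Section Krylov.
Variables (F : fieldType) (n : nat) (A : 'M[F]_n) (x : 'rV[F]_n).

Lemma mulmx_exp_eq0W {e e'} : x *m A ^+ e = 0 -> (e <= e')%N -> x *m A ^+ e' = 0.
Proof.
by move=> xAe0 le_ee'; rewrite -(subnKC le_ee') exprD -mulmxE mulmxA xAe0 mul0mx.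
Qed.

Lemma krylov_row_free {k} : x *m A ^+ k != 0 -> x *m A ^+ k.+1 = 0 ->
  row_free (\matrix_(i < k.+1) (x *m A ^+ i)).
Proof.
move=> xAk_neq0 xAk1_0; apply/inj_row_free => v vK0.
have v_eq0 : forall i : 'I_k.+1,
    (forall l : 'I_k.+1, (l < i)%N -> v 0 l = 0) -> v 0 i = 0.
  move=> i v_lt; have := congr1 (mulmx^~ (A ^+ (k - i))) vK0.
  rewrite mul0mx [v *m _]mulmx_sum_row mulmx_suml (bigD1 i) //= big1 ?addr0 => [|l neq_li].
    rewrite rowK -scalemxAl -mulmxA mulmxE -exprD subnKC ?leq_ord //.
    by move/eqP; rewrite scaler_eq0 (negPf xAk_neq0) orbF => /eqP.
  rewrite rowK -scalemxAl -mulmxA mulmxE -exprD.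
  case: (ltngtP l i) => [/v_lt -> | lt_il | /val_inj eq_li]; first by rewrite scale0r.
    by rewrite (mulmx_exp_eq0W xAk1_0) ?scaler0 //; have := leq_ord i; lia.
  by rewrite eq_li eqxx in neq_li.
suff v_lt : forall m (i : 'I_k.+1), (i < m)%N -> v 0 i = 0.
  by apply/rowP => i; rewrite mxE (v_lt k.+1).
elim=> // m IHm i lt_im; apply: v_eq0 => l lt_li.
exact: IHm (leq_trans lt_li lt_im).
Qed.

Lemma mulmx_exp_eq0_dim m : x *m A ^+ m = 0 -> x *m A ^+ n = 0.
Proof.
elim: m => [|m IHm] xAm0; first exact: (mulmx_exp_eq0W xAm0).
have [/IHm //|xAm_neq0] := eqVneq (x *m A ^+ m) 0.
apply: (mulmx_exp_eq0W xAm0).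
have := rank_leq_col (\matrix_(i < m.+1) (x *m A ^+ i)).
by rewrite (eqP (krylov_row_free xAm_neq0 xAm0)).
Qed.
End Krylov.

Section Products.
Variables (n : nat) (c : sconst n).

Definition rmul (y : 'rV[CC]_n) : 'M[CC]_n := \matrix_(i, k) \sum_j y 0 j * c i j k.
Definition lmul (x : 'rV[CC]_n) : 'M[CC]_n := \matrix_(j, k) \sum_i x 0 i * c i j k.

Lemma vmul_rmul x y : vmul c x y = x *m rmul y.
Proof.
apply/rowP => k; rewrite !mxE; apply: eq_bigr => i _; rewrite !mxE mulr_sumr.
by apply: eq_bigr => j _; rewrite !mulrA.
Qed.

Lemma vmul_lmul x y : vmul c x y = y *m lmul x.
Proof.
apply/rowP => k; rewrite !mxE exchange_big; apply: eq_bigr => j _.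
by rewrite !mxE mulr_sumr; apply: eq_bigr => i _; rewrite mulrCA !mulrA.
Qed.

Lemma leibniz_binary : is_leibniz c -> binary_leibniz c.
Proof. by move=> c_leib x y a b d _ _ _; apply: c_leib. Qed.

Lemma is_prod_pos m v : is_prod c m v -> (0 < m)%N.
Proof. by elim=> // i j x y _ IHx _ _; rewrite addn_gt0 IHx. Qed.

Lemma vmul0l y : vmul c 0 y = 0.
Proof. by rewrite vmul_rmul mul0mx. Qed.

(* [rpow m x] has m+1 factors: ((x x) x) ... x. *)
Fixpoint rpow (m : nat) (x : 'rV[CC]_n) : 'rV[CC]_n :=
  if m is m'.+1 then vmul c (rpow m' x) x else x.

Lemma rpow_rmul m x : rpow m x = x *m rmul x ^+ m.
Proof.
elim: m => [|m IHm] /=; first by rewrite expr0 mulmx1.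
by rewrite IHm vmul_rmul exprSr -mulmxA mulmxE.
Qed.

Lemma is_prod_rpow m x : is_prod c m.+1 (rpow m x).
Proof.
elim: m => [|m IHm] /=; first exact: prod_leaf.
by rewrite -addn1; apply: prod_node IHm (prod_leaf _ _).
Qed.

Lemma in_gen_subalg x y : is_subalg c (in_gen c x y).
Proof.
split=> [S [] // | u v gu gv | a u gu | u v gu gv] S SS Sx Sy; have [_ SD SZ SM] := SS.
- exact: SD (gu S SS Sx Sy) (gv S SS Sx Sy).
- exact: SZ (gu S SS Sx Sy).
- exact: SM (gu S SS Sx Sy) (gv S SS Sx Sy).
Qed.

Lemma in_gen_l x y : in_gen c x y x.
Proof. by move=> S _ Sx. Qed.

Lemma in_gen_rpow m x : in_gen c x x (rpow m x).
Proof.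
elim: m => [|m IHm] /=; first exact: in_gen_l.
by case: (in_gen_subalg x x) => _ _ _; apply.
Qed.

(* Inside the subalgebra generated by x, the Leibniz identity (ax)x = (ax)x + a(xx) kills a x^2,
   and (ap)x = (ax)p + a(px) propagates this from p to px. *)
Lemma vmul_rpowS_eq0 : binary_leibniz c ->
  forall m a x, in_gen c x x a -> vmul c a (rpow m.+1 x) = 0.
Proof.
move=> c_bl; elim=> [|m IHm] a x ga.
  have := c_bl x x a x x ga (in_gen_l x x) (in_gen_l x x).
  by rewrite /leibniz_id /= -[X in X = _]addr0 => /addrI <-.
have := c_bl x x a (rpow m.+1 x) x ga (in_gen_rpow _ _) (in_gen_l x x).
rewrite /leibniz_id IHm // vmul0l IHm ?add0r //.
by case: (in_gen_subalg x x) => _ _ _; apply=> //; exact: in_gen_l.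
Qed.

End Products.

Lemma in_orbit_intro n (c0 c : sconst n) (g : 'M[CC]_n) : g \in unitmx ->
  (forall a b, vmul c (a *m g) (b *m g) = vmul c0 a b *m g) -> Defs.in_orbit c0 c.
Proof.
move=> g_unit gM; exists g; split=> // x y.
by rewrite -gM !mulmxKV.
Qed.

Section OrbitTransport.
Variables (n : nat) (c0 c : sconst n) (g : 'M[CC]_n).
Hypotheses (g_unit : g \in unitmx)
  (c_def : forall x y, vmul c x y = vmul c0 (x *m invmx g) (y *m invmx g) *m g).

Lemma vmul_transport x y :
  vmul c x y *m invmx g = vmul c0 (x *m invmx g) (y *m invmx g).
Proof. by rewrite c_def mulmxK. Qed.

Lemma rpow_transport m x : rpow c m x *m invmx g = rpow c0 m (x *m invmx g).
Proof. by elim: m => //= m IHm; rewrite vmul_transport IHm. Qed.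

Lemma is_prod_transport m v : is_prod c m v -> is_prod c0 m (v *m invmx g).
Proof.
elim=> [x | i j x y _ IHx _ IHy]; first exact: prod_leaf.
by rewrite vmul_transport; apply: prod_node.
Qed.

Lemma leibniz_transport : is_leibniz c0 -> is_leibniz c.
Proof.
move=> c0_leib a b d; apply: (can_inj (mulmxKV g_unit)).
by rewrite /= mulmxDl !vmul_transport; apply: c0_leib.
Qed.

Lemma nilpotent_transport : nilpotent_alg c0 -> nilpotent_alg c.
Proof.
case=> m [m_gt0 c0_nil]; exists m; split=> // v /is_prod_transport /c0_nil v0.
by rewrite -(mulmxKV g_unit v) v0 mul0mx.
Qed.

End OrbitTransport.

Section NullFiliform.
Variable n' : nat.
Local Notation n := n'.+1.

Definition nullfil : sconst n := fun i j k => ((j == 0 :> nat) && (i.+1 == k :> nat))%:R.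

Definition shiftmx : 'M[CC]_n := \matrix_(i, k) (i.+1 == k :> nat)%:R.

Lemma vmul_nullfil a b : vmul nullfil a b = b 0 0 *: (a *m shiftmx).
Proof.
apply/rowP => k; rewrite !mxE mulr_sumr; apply: eq_bigr => i _.
rewrite (bigD1 ord0) //= big1 ?addr0 => [|j /negPf j_neq0].
  by rewrite /nullfil /shiftmx !mxE /= mulrAC mulrC mulrA.
by rewrite /nullfil -[j == 0 :> nat]/(j == ord0) j_neq0 mulr0.
Qed.

Lemma mulmx_shiftmx00 (a : 'rV[CC]_n) : (a *m shiftmx) 0 0 = 0.
Proof. by rewrite !mxE big1 // => i _; rewrite mxE mulr0. Qed.

Lemma shiftmx_mul (v : nat -> 'rV[CC]_n) :
  v n = 0 -> shiftmx *m \matrix_(i < n) v i = \matrix_(i < n) v i.+1.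
Proof.
move=> vn0; apply/row_matrixP => i; rewrite row_mul mulmx_sum_row rowK.
have [lt_in | ge_in] := ltnP i.+1 n.
  rewrite (bigD1 (Ordinal lt_in)) //= big1 ?addr0 => [|l neq_l].
    by rewrite !mxE eqxx scale1r rowK.
  by rewrite !mxE eq_sym -[_ == _]/(l == Ordinal lt_in) (negPf neq_l) scale0r.
have -> : v i.+1 = 0 by rewrite -vn0; congr v; apply/eqP; rewrite eqn_leq ge_in ltn_ord.
by rewrite big1 // => l _; rewrite !mxE gtn_eqF ?scale0r // (leq_trans (ltn_ord l) ge_in).
Qed.

Lemma nullfil_leibniz : is_leibniz nullfil.
Proof.
move=> a b d; rewrite /leibniz_id !vmul_nullfil mxE mulmx_shiftmx00 mulr0 scale0r addr0.
by rewrite -!scalemxAl !scalerA mulrC.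
Qed.

Lemma is_prod_nullfil m v : is_prod nullfil m v ->
  forall k : 'I_n, (k.+1 < m)%N -> v 0 k = 0.
Proof.
elim=> [// | i j x y _ IHx Py IHy k]; rewrite vmul_nullfil mxE.
case: j Py IHy => [/is_prod_pos // | [|j] _ IHy lt_k_ij]; last by rewrite IHy ?mul0r.
rewrite addn1 ltnS in lt_k_ij; rewrite mxE big1 ?mulr0 // => l _; rewrite mxE.
by case: eqP => [eq_lk | _]; [rewrite IHx ?mul0r // eq_lk | rewrite mulr0].
Qed.

Lemma nullfil_nilpotent : nilpotent_alg nullfil.
Proof.
exists n.+1; split=> // v /is_prod_nullfil v_lt.
by apply/rowP => k; rewrite mxE v_lt // ltnS.
Qed.

Lemma rpow_nullfil_diag {m} (lt_mn : (m < n)%N) y :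
  rpow nullfil m y 0 (Ordinal lt_mn) = y 0 0 ^+ m.+1.
Proof.
elim: m lt_mn => [|m IHm] lt_mn /=; first by rewrite expr1; congr (y 0 _); apply/val_inj.
rewrite vmul_nullfil !mxE exprS; congr (_ * _).
rewrite (bigD1 (Ordinal (ltnW lt_mn))) //= big1 ?addr0 => [|l neq_lm].
  by rewrite IHm mxE eqxx mulr1.
rewrite mxE /=; case: eqP => [[eq_lm] | _]; last by rewrite mulr0.
by rewrite -[_ != _]/(l != m :> nat) eq_lm eqxx in neq_lm.
Qed.

End NullFiliform.

Arguments nullfil {n'}.

Section NullFiliformOrbit.
Variables (n' : nat) (c : sconst n'.+1).
Local Notation n := n'.+1.

Lemma nullfil_orbit_variety : Defs.in_orbit nullfil c -> nbl_variety c.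
Proof.
case=> g [g_unit c_def]; split.
  exact/leibniz_binary/(leibniz_transport g_unit c_def)/nullfil_leibniz.
exact: nilpotent_transport g_unit c_def (nullfil_nilpotent n').
Qed.

Lemma nullfil_orbit_rpow : Defs.in_orbit nullfil c -> exists x, rpow c n' x != 0.
Proof.
case=> g [g_unit c_def]; exists (delta_mx 0 0 *m g); apply/eqP => rpow0.
have := rpow_nullfil_diag (ltnSn n') (delta_mx 0 0).
rewrite -{1}(mulmxK g_unit (delta_mx 0 0)) -(rpow_transport g_unit c_def) rpow0 mul0mx.
by rewrite !mxE eqxx expr1n => /eqP; rewrite eq_sym oner_eq0.
Qed.

Section PowerBasis.
Variable x : 'rV[CC]_n.
Hypotheses (c_bl : binary_leibniz c) (c_nil : nilpotent_alg c) (x_gen : rpow c n' x != 0).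

Let g := \matrix_(i < n) rpow c i x.

Lemma rpow_dim_eq0 : rpow c n x = 0.
Proof.
have [m [m_gt0 c_nil']] := c_nil.
have : x *m rmul c x ^+ m.-1 = 0.
  by rewrite -rpow_rmul; apply: c_nil'; rewrite -{1}(prednK m_gt0); apply: is_prod_rpow.
by move=> /mulmx_exp_eq0_dim; rewrite -rpow_rmul.
Qed.

Lemma power_basis_unit : g \in unitmx.
Proof.
rewrite -row_free_unit (_ : g = \matrix_(i < n) (x *m rmul c x ^+ i)).
  by apply: krylov_row_free; rewrite -!rpow_rmul // rpow_dim_eq0.
by apply/row_matrixP => i; rewrite !rowK rpow_rmul.
Qed.

Lemma power_basis_rmul : g *m rmul c x = shiftmx n' *m g.
Proof.
rewrite /g (shiftmx_mul (rpow c ^~ x)); last exact: rpow_dim_eq0.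
by apply/row_matrixP => i; rewrite row_mul !rowK -vmul_rmul.
Qed.

Lemma power_basis_annihilated m : g *m rmul c (rpow c m.+1 x) = 0.
Proof.
apply/row_matrixP => i; rewrite row_mul rowK row0 -vmul_rmul.
by apply: (vmul_rpowS_eq0 c_bl); apply: in_gen_rpow.
Qed.

Lemma nullfil_orbit_of_rpow : Defs.in_orbit nullfil c.
Proof.
apply: (in_orbit_intro power_basis_unit) => a b.
rewrite vmul_nullfil -scalemxAl -mulmxA -power_basis_rmul.
rewrite vmul_lmul -mulmxA mulmx_sum_row (bigD1 0) //= big1 ?addr0 => [|j j_neq0].
  by rewrite row_mul rowK -vmul_lmul vmul_rmul mulmxA.
rewrite row_mul rowK -vmul_lmul vmul_rmul -mulmxA.
by case: j j_neq0 => [[|j] ?] //= _; rewrite power_basis_annihilated mulmx0 scaler0.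
Qed.

End PowerBasis.

Lemma nullfil_orbitP :
  Defs.in_orbit nullfil c <-> nbl_variety c /\ exists x, rpow c n' x != 0.
Proof.
split=> [orb | [[c_bl c_nil] [x x_gen]]]; last exact: nullfil_orbit_of_rpow x_gen.
by split; [apply: nullfil_orbit_variety | apply: nullfil_orbit_rpow].
Qed.

End NullFiliformOrbit.

Fixpoint rpow_mpoly n (x : 'rV[CC]_n) (m : nat) (k : 'I_n) : {mpoly CC[nvars n]} :=
  if m is m'.+1 then
    \sum_(i < n) \sum_(j < n) rpow_mpoly x m' i * (x 0 j)%:MP * 'X_(enum_rank (i, j, k))
  else (x 0 k)%:MP.

Lemma rpow_mpoly_eval n (x : 'rV[CC]_n) m k (c : sconst n) :
  (rpow_mpoly x m k).@[coords c] = rpow c m x 0 k.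
Proof.
elim: m k => [|m IHm] k /=; first by rewrite mevalC.
rewrite !mxE raddf_sum; apply: eq_bigr => i _.
rewrite raddf_sum; apply: eq_bigr => j _.
by rewrite /= !mevalM IHm mevalC mevalXU /coords enum_rankK.
Qed.

Theorem mainTheorem7 (n : nat) (hn : (0 < n)%N) :
  exists c : sconst n, nbl_variety c /\ rigid_in (@nbl_variety n) c.
Proof.
case: n hn => [//|n'] _; exists nullfil; split.
  by split; [apply/leibniz_binary/nullfil_leibniz | apply: nullfil_nilpotent].
exists (fun p => exists x k, p = rpow_mpoly x n' k) => c; rewrite nullfil_orbitP.
split=> [[c_var [x /matrix0Pn [i [k xk]]]] | [c_var [_ [[x [k ->]] xk]]]]; split=> //.
  by exists (rpow_mpoly x n' k); rewrite rpow_mpoly_eval -(ord1 i); split; first exists x, k.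
by exists x; apply: contraNneq xk => xn0; rewrite rpow_mpoly_eval xn0 mxE.
Qed.
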